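(* Let $(V,L,\varphi,E)$ be a valuation system. Let $K$ be a sublattice of $V$ with $L$ a sublattice of $K$, and let $\psi:K\to E$ be a valuation which extends $\varphi$. Suppose $\psi$ is $\Pi$-extendible. Then $\varphi$ is $\Pi$-extendible and $\Pi\psi$ extends $\Pi\varphi$.
   Context: A valuation system $(V,L,\varphi,E)$ consists of: (i) a lattice $V$ which is $\sigma$-distributive, i.e. for every $a\in V$ and every sequence $(b_n)$ in $V$ whose infimum exists, $\bigwedge_n(a\vee b_n)$ exists and equals $a\vee\bigwedge_n b_n$, and dually for suprema; (ii) a sublattice $L$ of $V$; (iii) a partially ordered abelian group $E$ which is R-complete: whenever $x_1\ge x_2\ge\cdots$ and $y_1\ge y_2\ge\cdots$ in $E$ are such that $\bigwedge_n(x_n+y_n)$ exists, then $\bigwedge_n x_n$ and $\bigwedge_n y_n$ exist, and dually for increasing sequences and suprema; (iv) a valuation $\varphi:L\to E$, i.e. an order-preserving map with $\varphi(a\wedge b)+\varphi(a\vee b)=\varphi(a)+\varphi(b)$. A map $\psi:C\to E$ extends $\varphi:L\to E$ if $L\subseteq C$ and $\psi|_L=\varphi$. A decreasing sequence $a_1\ge a_2\ge\cdots$ in $L$ is $\varphi$-convergent if $\bigwedge_n a_n$ exists in $V$ and $\bigwedge_n\varphi(a_n)$ exists in $E$. Let $\Pi L:=\{\bigwedge_n a_n: (a_n)\text{ a }\varphi\text{-convergent decreasing sequence in }L\}$ (a sublattice of $V$). $\varphi$ is $\Pi$-extendible if there is a valuation $\Pi\varphi:\Pi L\to E$ with $\Pi\varphi(\bigwedge_n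 a_n)=\bigwedge_n\varphi(a_n)$ for every $\varphi$-convergent decreasing sequence $(a_n)$ in $L$; the same notions apply to $\psi$ on $K$. *)

From HB Require Import structures.
From mathcomp Require Import all_boot all_order all_algebra.
Set Implicit Arguments. Unset Strict Implicit. Unset Printing Implicit Defensive.
Import Order.TTheory GRing.Theory Num.Theory.
Local Open Scope order_scope.
Local Open Scope ring_scope.

Definition is_inf {d : Order.disp_t} {T : porderType d} (s : nat -> T) (x : T) :=
  (forall n, (x <= s n)%O) /\ (forall z, (forall n, (z <= s n)%O) -> (z <= x)%O).
Definition is_sup {d : Order.disp_t} {T : porderType d} (s : nat -> T) (x : T) :=
  (forall n, (s n <= x)%O) /\ (forall z, (forall n, (s n <= z)%O) -> (x <= z)%O).
Definition has_inf {d : Order.disp_t} {T : porderType d} (s : nat -> T) :=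
  exists x, is_inf s x.
Definition has_sup {d : Order.disp_t} {T : porderType d} (s : nat -> T) :=
  exists x, is_sup s x.

Definition sigma_distributive {d : Order.disp_t} (V : latticeType d) :=
  (forall (a : V) (b : nat -> V) (x : V), is_inf b x ->
     is_inf (fun n => (a `|` b n)%O) (a `|` x)%O) /\
  (forall (a : V) (b : nat -> V) (x : V), is_sup b x ->
     is_sup (fun n => (a `&` b n)%O) (a `&` x)%O).

Definition pogroup (E : porderZmodType) :=
  forall x y z : E, x <= y -> x + z <= y + z.

Definition R_complete (E : porderZmodType) :=
  (forall x y : nat -> E,
     (forall n, x n.+1 <= x n) -> (forall n, y n.+1 <= y n) ->
     has_inf (fun n => x n + y n) -> has_inf x /\ has_inf y) /\
  (forall x y : nat -> E,
     (forall n, x n <= x n.+1) -> (forall n, y n <= y n.+1) ->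
     has_sup (fun n => x n + y n) -> has_sup x /\ has_sup y).

Definition sublattice {d : Order.disp_t} {V : latticeType d} (L : V -> Prop) :=
  forall a b, L a -> L b -> L (a `&` b)%O /\ L (a `|` b)%O.

(* a valuation on (the sublattice) L; phi is a total function only its
   values on L matter *)
Definition valuation {d : Order.disp_t} {V : latticeType d}
    {E : porderZmodType} (L : V -> Prop) (phi : V -> E) :=
  (forall a b, L a -> L b -> (a <= b)%O -> phi a <= phi b) /\
  (forall a b, L a -> L b -> phi (a `&` b)%O + phi (a `|` b)%O = phi a + phi b).

Definition valuation_system {d : Order.disp_t} (V : latticeType d)
    (L : V -> Prop) (E : porderZmodType) (phi : V -> E) :=
  [/\ sigma_distributive V, sublattice L, pogroup E, R_complete E & valuation L phi].

Definition extends {d : Order.disp_t} {V : latticeType d}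
    {E : porderZmodType} (K : V -> Prop) (psi : V -> E)
    (L : V -> Prop) (phi : V -> E) :=
  (forall a, L a -> K a) /\ (forall a, L a -> psi a = phi a).

Definition decreasing_in {d : Order.disp_t} {V : latticeType d}
    (L : V -> Prop) (a : nat -> V) :=
  (forall n, L (a n)) /\ (forall n, (a n.+1 <= a n)%O).

Definition phi_convergent {d : Order.disp_t} {V : latticeType d}
    {E : porderZmodType} (L : V -> Prop) (phi : V -> E) (a : nat -> V) :=
  decreasing_in L a /\ has_inf a /\ has_inf (fun n => phi (a n)).

Definition PiL {d : Order.disp_t} {V : latticeType d}
    {E : porderZmodType} (L : V -> Prop) (phi : V -> E) (x : V) :=
  exists a, phi_convergent L phi a /\ is_inf a x.

Definition Pi_extension {d : Order.disp_t} {V : latticeType d}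
    {E : porderZmodType} (L : V -> Prop) (phi : V -> E) (Piphi : V -> E) :=
  valuation (PiL L phi) Piphi /\
  (forall a x y, phi_convergent L phi a -> is_inf a x ->
     is_inf (fun n => phi (a n)) y -> Piphi x = y).

Definition Pi_extendible {d : Order.disp_t} {V : latticeType d}
    {E : porderZmodType} (L : V -> Prop) (phi : V -> E) :=
  exists Piphi, Pi_extension L phi Piphi.

Arguments valuation_system {d} V L E phi.

From HB Require Import structures.
From mathcomp Require Import all_boot all_order all_algebra.
Set Implicit Arguments. Unset Strict Implicit. Unset Printing Implicit Defensive.

(* Since psi agrees with phi on L, every phi-convergent sequence of L is
   psi-convergent in K with the same values, so Pi L is contained in Pi K and
   Pi psi restricted to Pi L already satisfies the defining property of
   Pi phi; that property determines Pi phi uniquely. *)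

Lemma eq_is_inf (d : Order.disp_t) (T : porderType d) (s t : nat -> T) x :
  s =1 t -> is_inf s x -> is_inf t x.
Proof.
move=> eq_st [lb glb]; split=> [n|z z_lb]; first by rewrite -eq_st.
by apply: glb => n; rewrite eq_st.
Qed.

Section PiExtensionRestriction.

Variables (d : Order.disp_t) (V : latticeType d) (E : porderZmodType).

Lemma valuation_sub (L K : V -> Prop) (f : V -> E) :
  (forall a, L a -> K a) -> valuation K f -> valuation L f.
Proof.
move=> sLK [f_mono f_modular]; split=> a b La Lb.
  by apply: f_mono; apply: sLK.
by apply: f_modular; apply: sLK.
Qed.

Variables (L K : V -> Prop) (phi psi : V -> E).
Hypothesis psi_ext : extends K psi L phi.

Lemma phi_convergent_extends a :
  phi_convergent L phi a -> phi_convergent K psi a.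
Proof.
case: psi_ext => sLK psi_phi [[La a_decr] [a_inf [y phia_y]]].
split; first by split=> // n; apply: sLK.
split=> //; exists y; apply: eq_is_inf phia_y => n.
by rewrite psi_phi.
Qed.

Lemma PiL_extends x : PiL L phi x -> PiL K psi x.
Proof. by move=> [a [conv_a a_x]]; exists a; split; first exact: phi_convergent_extends. Qed.

Lemma Pi_extension_restrict Pipsi :
  Pi_extension K psi Pipsi -> Pi_extension L phi Pipsi.
Proof.
move=> [val_Pipsi Pipsi_inf]; split.
  exact: valuation_sub PiL_extends val_Pipsi.
move=> a x y conv_a a_x phia_y; apply: (Pipsi_inf a) => //.
  exact: phi_convergent_extends.
case: psi_ext conv_a => _ psi_phi [[La _] _].
by apply: eq_is_inf phia_y => n; rewrite psi_phi.
Qed.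

End PiExtensionRestriction.

Lemma Pi_extension_unique (d : Order.disp_t) (V : latticeType d)
    (E : porderZmodType) (L : V -> Prop) (phi f g : V -> E) x :
  Pi_extension L phi f -> Pi_extension L phi g -> PiL L phi x -> f x = g x.
Proof.
move=> [_ f_inf] [_ g_inf] [a [conv_a a_x]].
have [_ [_ [y phia_y]]] := conv_a.
by rewrite (f_inf a x y) // (g_inf a x y).
Qed.

Theorem lemma5p6 (d : Order.disp_t) (V : latticeType d) (E : porderZmodType)
    (L K : V -> Prop) (phi psi : V -> E) :
  valuation_system V L E phi ->
  sublattice K -> (forall a, L a -> K a) ->
  valuation K psi -> extends K psi L phi ->
  forall Pipsi : V -> E, Pi_extension K psi Pipsi ->
  Pi_extendible L phi /\
  (forall Piphi : V -> E, Pi_extension L phi Piphi ->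
     extends (PiL K psi) Pipsi (PiL L phi) Piphi).
Proof.
move=> _ _ _ _ psi_ext Pipsi Pipsi_ext.
have Pipsi_restr := Pi_extension_restrict psi_ext Pipsi_ext.
split; first by exists Pipsi.
move=> Piphi Piphi_ext; split; first exact: PiL_extends.
by move=> x PiLx; apply: Pi_extension_unique PiLx.
Qed.
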